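(* There exists $C=C(m)>1$, depending only on $m=\dim M$, such that for every $g\in\mathcal{M}^{\mathsf{G},\mathsf{T}}$, $$C^{-1}|A|_g^2\le|\hat A_g|_g\le C|A|_g^2,\qquad C^{-1}|A|_g^2\le|\check A_g|_g\le C|A|_g^2 .$$
   Context: $M=\mathsf{G}/\mathsf{H}$ ($m=\dim M$) is an almost-effective homogeneous space with $\mathsf{G},\mathsf{H}$ compact connected, $Q$ an $\mathrm{Ad}(\mathsf{G})$-invariant inner product on $\mathfrak{g}$, $\mathfrak{m}=\mathfrak{h}^{\perp_Q}$, $\mathfrak{m}_0=\{X\in\mathfrak{m}:[\mathfrak{h},X]=0\}$. Let $\mathsf{T}$ be a torus in the gauge group $N_{\mathsf{G}}(\mathsf{H})/\mathsf{H}$ with Lie algebra $\mathfrak{t}\subset\mathfrak{m}_0$ abelian, and $\mathfrak{m}=\mathfrak{t}+\mathfrak{b}$ $Q$-orthogonally ($\mathfrak{b}\cong T(\mathsf{G}/\mathsf{H}\mathsf{T})$). $\mathcal{M}^{\mathsf{G},\mathsf{T}}$ is the set of $\mathsf{G}$-invariant metrics $g=g_{\mathfrak{t}}+g_{\mathfrak{b}}$ with $\mathfrak{t}\perp_g\mathfrak{b}$ and $g_{\mathfrak{b}}$ $\mathrm{Ad}(\mathsf{H}\mathsf{T})$-invariant. The O'Neill tensor $A$ is given by $A_XY=\frac12[X,Y]_{\mathfrak{t}}$ (orthogonal projection to $\mathfrak{t}$) for $X,Y\in\mathfrak{b}$, $A_U=0$ for $U\in\mathfrak{t}$, and $A_XU\in\mathfrak{b}$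 with $g(A_XU,Y)=-g(A_XY,U)$. With $\{X_i\}$, $\{U_j\}$ $g$-orthonormal bases of $\mathfrak{b}$, $\mathfrak{t}$: $|A|_g^2=\sum_{i,j}|A_{X_i}X_j|_g^2$, $\hat A_g(U,V)=\sum_ig(A_{X_i}U,A_{X_i}V)$ on $\mathfrak{t}$, $\check A_g(X,Y)=\sum_ig(A_XX_i,A_YX_i)$ on $\mathfrak{b}$, with norms taken with respect to $g$. *)

From HB Require Import structures.
From mathcomp Require Import all_boot all_order all_algebra.
From mathcomp Require Import boolp classical_sets reals.
Set Implicit Arguments. Unset Strict Implicit. Unset Printing Implicit Defensive.
Import Order.TTheory GRing.Theory Num.Theory.
Local Open Scope ring_scope.

Section LieDefs.
Variable R : realType.
Variable n : nat.
Local Notation vec := 'rV[R]_n.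

Definition bil (B : 'M[R]_n) (x y : vec) : R := (x *m B *m y^T) 0 0.

Definition is_lie_bracket (br : vec -> vec -> vec) : Prop :=
  [/\ forall (a : R) x y z, br (a *: x + y) z = a *: br x z + br y z,
      forall x y, br x y = - br y x &
      forall x y z, br x (br y z) + br y (br z x) + br z (br x y) = 0].

Definition ad_inv_inner_product (br : vec -> vec -> vec) (Q : 'M[R]_n) : Prop :=
  [/\ Q^T = Q, forall x : vec, x != 0 -> 0 < bil Q x x &
      forall z x y, bil Q (br z x) y + bil Q x (br z y) = 0].

Definition subalgebra (br : vec -> vec -> vec) (S : 'M[R]_n) : Prop :=
  forall x y : vec, (x <= S)%MS -> (y <= S)%MS -> (br x y <= S)%MS.

Definition ideal (br : vec -> vec -> vec) (S : 'M[R]_n) : Prop :=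
  forall x y : vec, (y <= S)%MS -> (br x y <= S)%MS.

Definition almost_effective (br : vec -> vec -> vec) (H : 'M[R]_n) : Prop :=
  forall I : 'M[R]_n, ideal br I -> (I <= H)%MS -> I = 0.

(* m = h^{perp_Q} : x with x Q h^T = 0 for every row h of H *)
Definition mspace (Q H : 'M[R]_n) : 'M[R]_n := kermx (Q *m H^T).

(* b = Q-orthogonal complement of t inside m *)
Definition bspace (Q H T : 'M[R]_n) : 'M[R]_n :=
  (mspace Q H :&: kermx (Q *m T^T))%MS.

Definition torus_data (br : vec -> vec -> vec) (Q H T : 'M[R]_n) : Prop :=
  [/\ (T <= mspace Q H)%MS,
      forall h x : vec, (h <= H)%MS -> (x <= T)%MS -> br h x = 0 &
      forall x y : vec, (x <= T)%MS -> (y <= T)%MS -> br x y = 0].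

(* g = g_t + g_b in M^{G,T}: a G-invariant metric on G/H is an
   Ad(H)-invariant inner product on m (infinitesimally: ad(h)-invariant,
   H connected); t _|_g b; g_b is Ad(HT)-invariant (ad(h+t)-invariant). *)
Definition metric_in_MGT (br : vec -> vec -> vec) (Q H T G : 'M[R]_n) : Prop :=
  let m := mspace Q H in let b := bspace Q H T in
  [/\ forall x y : vec, (x <= m)%MS -> (y <= m)%MS -> bil G x y = bil G y x,
      forall x : vec, (x <= m)%MS -> x != 0 -> 0 < bil G x x,
      forall h x y : vec, (h <= H)%MS -> (x <= m)%MS -> (y <= m)%MS ->
        bil G (br h x) y + bil G x (br h y) = 0,
      forall u x : vec, (u <= T)%MS -> (x <= b)%MS -> bil G u x = 0 &
      forall u x y : vec, (u <= T)%MS -> (x <= b)%MS -> (y <= b)%MS ->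
        bil G (br u x) y + bil G x (br u y) = 0].

Definition projQ (Q T : 'M[R]_n) (Z : vec) : vec :=
  xget 0 (fun p : vec => (p <= T)%MS /\
             forall u : vec, (u <= T)%MS -> bil Q (Z - p) u = 0).

(* O'Neill tensor: A_X Y = 1/2 [X,Y]_t for X, Y in b *)
Definition A_XY (br : vec -> vec -> vec) (Q T : 'M[R]_n) (X Y : vec) : vec :=
  2^-1 *: projQ Q T (br X Y).

Definition A_XU (br : vec -> vec -> vec) (Q H T G : 'M[R]_n) (X U : vec) : vec :=
  xget 0 (fun w : vec => (w <= bspace Q H T)%MS /\
     forall Y : vec, (Y <= bspace Q H T)%MS ->
       bil G w Y = - bil G (A_XY br Q T X Y) U).

Definition g_ON_basis (G S : 'M[R]_n) (k : nat) (E : 'I_k -> vec) : Prop :=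
  k = \rank S /\ (forall i, (E i <= S)%MS) /\
  (forall i j, bil G (E i) (E j) = (i == j)%:R).

Section Norms.
Variables (br : vec -> vec -> vec) (Q H T G : 'M[R]_n).
Variables (kb kt : nat) (X : 'I_kb -> vec) (U : 'I_kt -> vec).

Definition normA2 : R :=
  \sum_(i < kb) \sum_(j < kb)
     bil G (A_XY br Q T (X i) (X j)) (A_XY br Q T (X i) (X j)).

Definition Ahat (V W : vec) : R :=
  \sum_(i < kb) bil G (A_XU br Q H T G (X i) V) (A_XU br Q H T G (X i) W).

Definition Acheck (Y Z : vec) : R :=
  \sum_(i < kb) bil G (A_XY br Q T Y (X i)) (A_XY br Q T Z (X i)).

Definition norm_Ahat : R :=
  Num.sqrt (\sum_(j < kt) \sum_(k < kt) (Ahat (U j) (U k)) ^+ 2).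
Definition norm_Acheck : R :=
  Num.sqrt (\sum_(i < kb) \sum_(j < kb) (Acheck (X i) (X j)) ^+ 2).
End Norms.
End LieDefs.

From HB Require Import structures.
From mathcomp Require Import all_boot all_order all_algebra.
From mathcomp Require Import boolp classical_sets reals.
From mathcomp Require Import ring lra.
Set Implicit Arguments. Unset Strict Implicit. Unset Printing Implicit Defensive.
Import Order.TTheory GRing.Theory Num.Theory.
Local Open Scope ring_scope.

(** Both Ahat_g and Acheck_g are Gram matrices of families of vectors
    (j |-> (A_{X_i} U_j)_i and j |-> (A_{X_j} X_i)_i), and both have trace
    |A|_g^2.  For a positive semidefinite k x k matrix N, Cauchy-Schwarz
    gives N_jl^2 <= N_jj N_ll, whence |N|^2 <= (tr N)^2 <= k |N|^2; since
    k <= m the constant C = m + 2, which exceeds both 1 and sqrt m, works. *)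

Section QuadraticBounds.
Variable R : realFieldType.

Lemma sqr_le_mul_of_quadratic_ge0 (A B M : R) :
  (forall s t, 0 <= s ^+ 2 * A - 2 * s * t * M + t ^+ 2 * B) -> M ^+ 2 <= A * B.
Proof.
move=> q; have q1 := q B M; have q2 := q M A; have q3 := q M 1.
have A0 := q 1 0; have B0 := q 0 1.
have [Bp|] := ltP 0 B; first by nra.
have [Ap|] := ltP 0 A; first by nra.
nra.
Qed.

Lemma sqr_sum_le_card_sum_sqr (k : nat) (x : 'I_k -> R) :
  (\sum_j x j) ^+ 2 <= k%:R * \sum_j x j ^+ 2.
Proof.
apply: sqr_le_mul_of_quadratic_ge0 => s t.
have -> : s ^+ 2 * k%:R - 2 * s * t * (\sum_j x j) + t ^+ 2 * (\sum_j x j ^+ 2)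
    = \sum_j (s - t * x j) ^+ 2.
  rewrite -[k in k%:R]card_ord -sumr_const !mulr_sumr -sumrB -big_split /=.
  by apply: eq_bigr => j _; ring.
by apply: sumr_ge0 => j _; exact: sqr_ge0.
Qed.

Section GramLike.
Variables (k : nat) (N : 'I_k -> 'I_k -> R).

Lemma sum_sqr_le_sqr_trace :
  (forall j l, N j l ^+ 2 <= N j j * N l l) ->
  \sum_j \sum_l N j l ^+ 2 <= (\sum_j N j j) ^+ 2.
Proof.
move=> cs; rewrite expr2 mulr_suml; apply: ler_sum => j _.
by rewrite mulr_sumr; apply: ler_sum => l _.
Qed.

Lemma sqr_trace_le_card_sum_sqr :
  (\sum_j N j j) ^+ 2 <= k%:R * \sum_j \sum_l N j l ^+ 2.
Proof.
apply: le_trans (sqr_sum_le_card_sum_sqr (fun j => N j j)) _.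
apply: ler_wpM2l => //; apply: ler_sum => j _.
by rewrite (bigD1 j) //= lerDl; apply: sumr_ge0 => l _; exact: sqr_ge0.
Qed.
End GramLike.
End QuadraticBounds.

Lemma sqrt_sum_sqr_trace_bounds (R : rcfType) (k m : nat)
    (N : 'I_k -> 'I_k -> R) :
  (k <= m)%N -> (forall j l, N j l ^+ 2 <= N j j * N l l) ->
  (forall j, 0 <= N j j) ->
  let S := \sum_j \sum_l N j l ^+ 2 in let a := \sum_j N j j in
  (m%:R + 2)^-1 * a <= Num.sqrt S /\ Num.sqrt S <= (m%:R + 2) * a.
Proof.
move=> km cs N0 S a.
have S0 : 0 <= S by do 2 (apply: sumr_ge0 => ? _); exact: sqr_ge0.
have a0 : 0 <= a by apply: sumr_ge0.
have m0 : 0 <= m%:R :> R by [].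
have km' : k%:R <= m%:R :> R by rewrite ler_nat.
have Sa := sum_sqr_le_sqr_trace cs; have aS := sqr_trace_le_card_sum_sqr N.
have C0 : 0 < m%:R + 2 :> R by lra.
split.
  rewrite -(@ger0_norm _ ((m%:R + 2)^-1 * a)); last by rewrite mulr_ge0 // invr_ge0 ltW.
  rewrite -sqrtr_sqr ler_sqrt // exprMn exprVn ler_pdivrMl ?exprn_gt0 //.
  have : k%:R * S <= (m%:R + 2) ^+ 2 * S by apply: ler_wpM2r => //; nra.
  rewrite -/S -/a in aS; lra.
apply: (@le_trans _ _ a); last by nra.
by rewrite -[a]ger0_norm // -sqrtr_sqr ler_sqrt // sqr_ge0.
Qed.

Lemma linear_sum_scale (R : pzRingType) (U V : lmodType R) (f : U -> V)
    (I : finType) (c : I -> R) (F : I -> U) :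
  linear f -> f (\sum_i c i *: F i) = \sum_i c i *: f (F i).
Proof.
move=> fL; have f0 : f 0 = 0.
  by have := fL (-1) 0 0; rewrite scaler0 add0r scaleN1r addNr.
elim/big_rec2: _ => [|i y1 y2 _ <-]; first exact: f0.
by rewrite fL.
Qed.

Section Bilinear.
Variables (R : realType) (n : nat).
Local Notation vec := 'rV[R]_n.
Implicit Types (B : 'M[R]_n) (x y z : vec).

Lemma bilDl B x y z : bil B (x + y) z = bil B x z + bil B y z.
Proof. by rewrite /bil !mulmxDl mxE. Qed.
Lemma bilDr B x y z : bil B x (y + z) = bil B x y + bil B x z.
Proof. by rewrite /bil linearD /= mulmxDr mxE. Qed.
Lemma bilZl B a x y : bil B (a *: x) y = a * bil B x y.
Proof. by rewrite /bil -!scalemxAl mxE. Qed.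
Lemma bilZr B a x y : bil B x (a *: y) = a * bil B x y.
Proof. by rewrite /bil linearZ /= -scalemxAr mxE. Qed.
Lemma bil0l B y : bil B 0 y = 0.
Proof. by rewrite -(scale0r (0 : vec)) bilZl mul0r. Qed.
Lemma bil0r B y : bil B y 0 = 0.
Proof. by rewrite -(scale0r (0 : vec)) bilZr mul0r. Qed.
Lemma bilNl B x y : bil B (- x) y = - bil B x y.
Proof. by rewrite -scaleN1r bilZl mulN1r. Qed.
Lemma bilBl B x y z : bil B (x - y) z = bil B x z - bil B y z.
Proof. by rewrite bilDl bilNl. Qed.
Lemma bilBr B x y z : bil B x (y - z) = bil B x y - bil B x z.
Proof. by rewrite bilDr -scaleN1r bilZr mulN1r. Qed.

Lemma bil_suml B (I : finType) (F : I -> vec) y :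
  bil B (\sum_i F i) y = \sum_i bil B (F i) y.
Proof. by elim/big_rec2: _ => [|i a b _ <-]; [exact: bil0l | exact: bilDl]. Qed.
Lemma bil_sumr B (I : finType) (F : I -> vec) y :
  bil B y (\sum_i F i) = \sum_i bil B y (F i).
Proof. by elim/big_rec2: _ => [|i a b _ <-]; [exact: bil0r | exact: bilDr]. Qed.

Lemma subrmx_sub m1 m2 (A B : 'M[R]_(m1, n)) (C : 'M[R]_(m2, n)) :
  (A <= C)%MS -> (B <= C)%MS -> (A - B <= C)%MS.
Proof. by move=> hA hB; rewrite -scaleN1r addmx_sub // scalemx_sub. Qed.

Section PositiveOn.
Variables (G M : 'M[R]_n).
Hypothesis Gpos : forall x : vec, (x <= M)%MS -> x != 0 -> 0 < bil G x x.
Hypothesis Gsym : forall x y : vec, (x <= M)%MS -> (y <= M)%MS -> bil G x y = bil G y x.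

Lemma bil_ge0 x : (x <= M)%MS -> 0 <= bil G x x.
Proof.
move=> xM; have [->|x0] := eqVneq x 0; first by rewrite bil0l.
exact/ltW/Gpos.
Qed.

Lemma bil_eq0 x : (x <= M)%MS -> bil G x x = 0 -> x = 0.
Proof.
move=> xM xx0; apply/eqP; apply: contraT => x0.
by have := Gpos xM x0; rewrite xx0 ltxx.
Qed.

Lemma sum_bil_ge0 p (a : 'I_p -> vec) :
  (forall i, (a i <= M)%MS) -> 0 <= \sum_i bil G (a i) (a i).
Proof. by move=> aM; apply: sumr_ge0 => i _; exact: bil_ge0. Qed.

Lemma sum_bil_cauchy_schwarz p (a b : 'I_p -> vec) :
  (forall i, (a i <= M)%MS) -> (forall i, (b i <= M)%MS) ->
  (\sum_i bil G (a i) (b i)) ^+ 2 <=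
  (\sum_i bil G (a i) (a i)) * (\sum_i bil G (b i) (b i)).
Proof.
move=> aM bM; apply: sqr_le_mul_of_quadratic_ge0 => s t.
have -> : s ^+ 2 * (\sum_i bil G (a i) (a i)) - 2 * s * t * (\sum_i bil G (a i) (b i))
    + t ^+ 2 * (\sum_i bil G (b i) (b i)) =
    \sum_i bil G (s *: a i - t *: b i) (s *: a i - t *: b i).
  rewrite !mulr_sumr -sumrB -big_split /=; apply: eq_bigr => i _.
  by rewrite !bilBl !bilBr !bilZl !bilZr (Gsym (bM i) (aM i)); ring.
by apply: sum_bil_ge0 => i; apply: subrmx_sub; exact: scalemx_sub.
Qed.

Lemma gram_sum_sqr_trace_bounds (k m p : nat) (v : 'I_k -> 'I_p -> vec) :
  (k <= m)%N -> (forall j i, (v j i <= M)%MS) ->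
  let N j l := \sum_i bil G (v j i) (v l i) in
  (m%:R + 2)^-1 * \sum_j N j j <= Num.sqrt (\sum_j \sum_l N j l ^+ 2) /\
  Num.sqrt (\sum_j \sum_l N j l ^+ 2) <= (m%:R + 2) * \sum_j N j j.
Proof.
move=> km vM N; apply: sqrt_sum_sqr_trace_bounds => // [j l|j].
  exact: sum_bil_cauchy_schwarz.
exact: sum_bil_ge0.
Qed.

Section OrthonormalBasis.
Variables (S : 'M[R]_n) (k : nat) (E : 'I_k -> vec).
Hypothesis EB : g_ON_basis G S E.

Lemma onb_row_free : row_free (\matrix_i E i).
Proof.
case: EB => _ [_ ON]; apply: inj_row_free => c cE0; apply/rowP => j.
have : bil G (c *m \matrix_i E i) (E j) = 0 by rewrite cE0 bil0l.
rewrite mulmx_sum_row bil_suml.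
under eq_bigr => i _ do rewrite rowK bilZl ON.
rewrite (bigD1 j) //= big1 ?addr0 ?eqxx ?mulr1 ?mxE // => i /negbTE ->.
by rewrite mulr0.
Qed.

Lemma onb_mx_sub : (\matrix_i E i <= S)%MS.
Proof. by case: EB => _ [ES _]; apply/row_subP => i; rewrite rowK. Qed.

Lemma onb_span y : (y <= S)%MS -> (y <= \matrix_i E i)%MS.
Proof.
move=> yS; apply: submx_trans yS _.
have [_ <-] := mxrank_leqif_sup onb_mx_sub.
by case: EB => <- _; exact: onb_row_free.
Qed.

Hypothesis SM : (S <= M)%MS.

Lemma onb_expand y : (y <= S)%MS -> y = \sum_i bil G y (E i) *: E i.
Proof.
move=> yS; case: EB => _ [ES ON].
set z := y - \sum_i bil G y (E i) *: E i.
have zS : (z <= S)%MS.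
  by apply: subrmx_sub => //; apply: summx_sub => i _; exact: scalemx_sub.
have zE j : bil G z (E j) = 0.
  rewrite bilBl bil_suml; under eq_bigr => i _ do rewrite bilZl ON.
  rewrite (bigD1 j) //= big1 ?addr0 ?eqxx ?mulr1 ?subrr // => i /negbTE ->.
  by rewrite mulr0.
have zz0 : bil G z z = 0.
  have /submxP [c zc] := onb_span zS.
  rewrite {2}zc mulmx_sum_row bil_sumr big1 // => i _.
  by rewrite rowK bilZr zE mulr0.
by apply/eqP; rewrite -subr_eq0 -/z (bil_eq0 (submx_trans zS SM)).
Qed.

Lemma onb_parseval y : (y <= S)%MS -> bil G y y = \sum_i bil G y (E i) ^+ 2.
Proof.
move=> yS; rewrite {2}(onb_expand yS) bil_sumr.
by apply: eq_bigr => i _; rewrite bilZr expr2.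
Qed.
End OrthonormalBasis.
End PositiveOn.

Section Projection.
Variables (Q T G : 'M[R]_n) (k : nat) (E : 'I_k -> vec).
Hypothesis Qpos : forall x : vec, x != 0 -> 0 < bil Q x x.
Hypothesis EB : g_ON_basis G T E.

Definition is_projQ (z p : vec) :=
  (p <= T)%MS /\ forall u : vec, (u <= T)%MS -> bil Q (z - p) u = 0.

Lemma projQ_exists z : exists p, is_projQ z p.
Proof.
set ME := \matrix_i E i; set K := ME *m Q *m ME^T.
have Kunit : K \in unitmx.
  rewrite -row_free_unit; apply: inj_row_free => c cK0.
  have cE0 : bil Q (c *m ME) (c *m ME) = 0.
    by rewrite /bil trmx_mul !mulmxA; rewrite !mulmxA in cK0; rewrite cK0 mul0mx mxE.
  apply: (row_free_inj (onb_row_free EB)); rewrite mul0mx.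
  apply/eqP; apply: contraT => nz; by have := Qpos nz; rewrite cE0 ltxx.
set c := z *m Q *m ME^T *m invmx K.
have cK : c *m ME *m Q *m ME^T = z *m Q *m ME^T.
  by rewrite -(mulmxKV Kunit (z *m Q *m ME^T)) /K !mulmxA.
exists (c *m ME); split; first exact: submx_trans (submxMl _ _) (onb_mx_sub EB).
move=> u uT; have /submxP [d ->] := onb_span EB uT.
by rewrite /bil trmx_mul !mulmxA !mulmxBl cK subrr mxE.
Qed.

Lemma projQ_unique z p p' : is_projQ z p -> is_projQ z p' -> p = p'.
Proof.
move=> [pT zp] [p'T zp']; apply/eqP; rewrite -subr_eq0; apply/eqP.
have dT : (p - p' <= T)%MS by exact: subrmx_sub.
have e : (z - p') - (z - p) = p - p' by rewrite opprB addrC addrA subrK.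
have dd0 : bil Q (p - p') (p - p') = 0 by rewrite -{1}e bilBl zp' ?zp ?subrr.
apply/eqP; apply: contraT => nz; by have := Qpos nz; rewrite dd0 ltxx.
Qed.

Lemma projQP z : is_projQ z (projQ Q T z).
Proof. exact: (xgetPex 0 (projQ_exists z)). Qed.

Lemma projQ_linear : linear (projQ Q T).
Proof.
move=> a z z'; apply: projQ_unique (projQP _) _.
have [pT zp] := projQP z; have [p'T zp'] := projQP z'.
split; first by apply: addmx_sub => //; exact: scalemx_sub.
move=> u uT.
rewrite opprD addrACA -scalerBr bilDl bilZl zp // zp' //.
by rewrite mulr0 addr0.
Qed.
End Projection.

Section ONeillTensor.
Variables (br : vec -> vec -> vec) (Q H T G : 'M[R]_n).
Variables (kb kt : nat) (X : 'I_kb -> vec) (U : 'I_kt -> vec).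
Hypothesis brL : is_lie_bracket br.
Hypothesis QL : ad_inv_inner_product br Q.
Hypothesis TD : torus_data br Q H T.
Hypothesis GM : metric_in_MGT br Q H T G.
Hypothesis XB : g_ON_basis G (bspace Q H T) X.
Hypothesis UB : g_ON_basis G T U.

Local Notation m := (mspace Q H).
Local Notation b := (bspace Q H T).

Let Qpos : forall x : vec, x != 0 -> 0 < bil Q x x. Proof. by case: QL. Qed.
Let Gpos : forall x : vec, (x <= m)%MS -> x != 0 -> 0 < bil G x x.
Proof. by case: GM. Qed.
Let Gsym : forall x y : vec, (x <= m)%MS -> (y <= m)%MS -> bil G x y = bil G y x.
Proof. by case: GM. Qed.
Let Tm : (T <= m)%MS. Proof. by case: TD. Qed.
Let bm : (b <= m)%MS. Proof. exact: capmxSl. Qed.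
Let Xb i : (X i <= b)%MS. Proof. by case: XB => _ []. Qed.
Let Xm i : (X i <= m)%MS. Proof. exact: submx_trans (Xb i) bm. Qed.

Lemma A_XY_sub x y : (A_XY br Q T x y <= T)%MS.
Proof. by apply: scalemx_sub; case: (projQP Qpos UB (br x y)). Qed.

Lemma A_XY_linear x : linear (A_XY br Q T x).
Proof.
case: brL => brDl br_anti _ a y y'; rewrite /A_XY.
have -> : br x (a *: y + y') = a *: br x y + br x y'.
  by rewrite br_anti brDl opprD -scalerN -!br_anti.
by rewrite (projQ_linear Qpos UB) scalerDr !scalerA mulrC.
Qed.

Lemma bil_A_XY_expand x u y : (y <= b)%MS ->
  bil G (A_XY br Q T x y) u =
  \sum_i bil G y (X i) * bil G (A_XY br Q T x (X i)) u.
Proof.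
move=> yb; rewrite {1}(onb_expand Gpos XB bm yb).
rewrite linear_sum_scale ?bil_suml; last exact: A_XY_linear.
by apply: eq_bigr => i _; rewrite bilZl.
Qed.

(* The witness is the vector of b representing Y |-> - g(A_X Y, U) in the basis X. *)
Lemma A_XUP x u : (A_XU br Q H T G x u <= b)%MS /\
  forall y, (y <= b)%MS -> bil G (A_XU br Q H T G x u) y = - bil G (A_XY br Q T x y) u.
Proof.
apply: (xgetPex 0 (P := fun w => (w <= b)%MS /\ forall y, (y <= b)%MS ->
  bil G w y = - bil G (A_XY br Q T x y) u)).
exists (- \sum_i bil G (A_XY br Q T x (X i)) u *: X i); split.
  rewrite -scaleN1r scalemx_sub // summx_sub // => i _; exact: scalemx_sub.
move=> y yb; rewrite bil_A_XY_expand // bilNl bil_suml; congr (- _).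
by apply: eq_bigr => i _; rewrite bilZl mulrC (Gsym (Xm i) (submx_trans yb bm)).
Qed.

Lemma A_XU_sub_m x u : (A_XU br Q H T G x u <= m)%MS.
Proof. exact: submx_trans (A_XUP x u).1 bm. Qed.

Lemma A_XY_sub_m x y : (A_XY br Q T x y <= m)%MS.
Proof. exact: submx_trans (A_XY_sub x y) Tm. Qed.

(* Both sides equal sum_{i,j,l} g(A_{X_i} X_l, U_j)^2, by Parseval in b and in t. *)
Lemma trace_Ahat : \sum_j Ahat br Q H T G X (U j) (U j) = normA2 br Q T G X.
Proof.
rewrite /Ahat /normA2 exchange_big /=; apply: eq_bigr => i _.
under eq_bigr => j _ do rewrite (onb_parseval Gpos XB bm (A_XUP _ _).1).
rewrite exchange_big; apply: eq_bigr => l _ /=.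
rewrite (onb_parseval Gpos UB Tm (A_XY_sub _ _)); apply: eq_bigr => j _.
by rewrite (A_XUP _ _).2 ?sqrrN.
Qed.

Lemma gram_bounds_Ahat d : (kt <= d)%N ->
  (d%:R + 2)^-1 * normA2 br Q T G X <= norm_Ahat br Q H T G X U /\
  norm_Ahat br Q H T G X U <= (d%:R + 2) * normA2 br Q T G X.
Proof.
move=> ktm; rewrite -trace_Ahat.
exact: (gram_sum_sqr_trace_bounds Gpos Gsym (v := fun j i => A_XU br Q H T G (X i) (U j))
  ktm (fun j i => A_XU_sub_m _ _)).
Qed.

(* The trace of Acheck_g is |A|_g^2 by definition, so no basis property of X is needed. *)
Lemma gram_bounds_Acheck d : (kb <= d)%N ->
  (d%:R + 2)^-1 * normA2 br Q T G X <= norm_Acheck br Q T G X /\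
  norm_Acheck br Q T G X <= (d%:R + 2) * normA2 br Q T G X.
Proof.
move=> kbm.
exact: (gram_sum_sqr_trace_bounds Gpos Gsym (v := fun j i => A_XY br Q T (X j) (X i))
  kbm (fun j i => A_XY_sub_m _ _)).
Qed.
End ONeillTensor.
End Bilinear.

Theorem proposition4p2 (R : realType) (m : nat) :
  exists C : R, 1 < C /\
  forall (n : nat) (br : 'rV[R]_n -> 'rV[R]_n -> 'rV[R]_n) (Q H T G : 'M[R]_n),
    is_lie_bracket br ->
    ad_inv_inner_product br Q ->
    subalgebra br H ->
    almost_effective br H ->
    \rank (mspace Q H) = m ->
    torus_data br Q H T ->
    metric_in_MGT br Q H T G ->
    forall (kb kt : nat) (X : 'I_kb -> 'rV[R]_n) (U : 'I_kt -> 'rV[R]_n),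
      g_ON_basis G (bspace Q H T) X ->
      g_ON_basis G T U ->
      [/\ C^-1 * normA2 br Q T G X <= norm_Ahat br Q H T G X U,
          norm_Ahat br Q H T G X U <= C * normA2 br Q T G X,
          C^-1 * normA2 br Q T G X <= norm_Acheck br Q T G X &
          norm_Acheck br Q T G X <= C * normA2 br Q T G X].
Proof.
exists (m%:R + 2); split; first by have : 0 <= m%:R :> R by []; lra.
move=> n br Q H T G brL QL _ _ rk TD GM kb kt X U XB UB.
have kbm : (kb <= m)%N by case: XB => e _; rewrite e -rk mxrankS // capmxSl.
have ktm : (kt <= m)%N by case: UB => e _; rewrite e -rk mxrankS //; case: TD.
have [hat_lo hat_hi] := gram_bounds_Ahat brL QL TD GM XB UB ktm.
have [check_lo check_hi] := gram_bounds_Acheck X QL TD GM UB kbm.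
by split; assumption.
Qed.
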